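(* For every rule $\mathcal{R}$ and every starting vertex, the greedy random walk on the complete graph $K_n=(V,E)$ satisfies \[ \mathbb{E}[C_E(K_n)] \le |E| + (1+o(1))\, n\log n, \] where $o(1)\to0$ as $n\to\infty$ uniformly in the rule and the starting vertex. (Indeed, the overhead is at most $\sum_{i=1}^{n-1}\frac{n-1}{n-i}$.)
   Context: A greedy random walk (GRW) on a connected locally finite graph $G=(V,E)$ with rule $\mathcal{R}$ started at $v_0$: $X_0=v_0$; with $H_t=\{\{X_{s-1},X_s\}:0<s\le t\}$ (edges traversed up to time $t$) and $J_t(v)=\{e\in E: v\in e, e\notin H_t\}$, if $J_t(X_t)\ne\emptyset$ then $X_{t+1}=w$ for some $w$ with $\{X_t,w\}\in J_t(X_t)$, chosen according to an arbitrary (possibly randomized, history-dependent) rule $\mathcal{R}$; if $J_t(X_t)=\emptyset$ then $X_{t+1}$ is a uniformly random neighbor of $X_t$. For finite $G$, the edge cover time is $C_E(G)=\min\{t:H_t=E\}$. $\log$ is the natural logarithm. *)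

From Stdlib Require Import Reals List Arith Bool.
Import ListNotations.
Open Scope R_scope.

(* The complete graph K_n has vertex set {0,...,n-1} and edge set all
   unordered pairs {u,v} with u <> v.  A walk history is the list
   [X_0; X_1; ...; X_t] of visited vertices. *)

Definition edge_eqb (a b c d : nat) : bool :=
  ((a =? c) && (b =? d)) || ((a =? d) && (b =? c)).

Fixpoint traversed (h : list nat) (u v : nat) : bool :=
  match h with
  | x :: ((y :: _) as t) => edge_eqb x y u v || traversed t u v
  | _ => false
  end.

Definition last_vertex (h : list nat) : nat := last h 0%nat.

Definition unused_nbr (n : nat) (h : list nat) (w : nat) : bool :=
  let v := last_vertex h in
  (v <? n)%nat && (w <? n)%nat && negb (v =? w)%nat && negb (traversed h v w).

Definition has_unused (n : nat) (h : list nat) : bool :=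
  existsb (unused_nbr n h) (seq 0 n).

(* A (randomized, history-dependent) greedy rule: given the history, a
   probability distribution on the endpoints of unused edges at X_t. *)
Definition valid_rule (n : nat) (rule : list nat -> nat -> R) : Prop :=
  forall h, has_unused n h = true ->
    (forall w, unused_nbr n h w = true -> 0 <= rule h w) /\
    fold_right Rplus 0
      (map (fun w => if unused_nbr n h w then rule h w else 0) (seq 0 n)) = 1.

Definition step_prob (n : nat) (rule : list nat -> nat -> R)
    (h : list nat) (w : nat) : R :=
  if has_unused n h then (if unused_nbr n h w then rule h w else 0)
  else (if ((w <? n) && negb (last_vertex h =? w))%nat
        then / INR (n - 1) else 0).

Fixpoint prob_from (n : nat) (rule : list nat -> nat -> R)
    (pre : list nat) (rest : list nat) : R :=
  match rest with
  | [] => 1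
  | w :: rest' => step_prob n rule pre w * prob_from n rule (pre ++ [w]) rest'
  end.

Fixpoint seqs (n t : nat) : list (list nat) :=
  match t with
  | O => [[]]
  | S t' => flat_map (fun w => map (cons w) (seqs n t')) (seq 0 n)
  end.

Definition all_covered (n : nat) (h : list nat) : bool :=
  forallb (fun u => forallb (fun v => implb (u <? v)%nat (traversed h u v))
                            (seq 0 n)) (seq 0 n).

Definition prob_cover_gt (n : nat) (rule : list nat -> nat -> R) (v0 t : nat) : R :=
  fold_right Rplus 0
    (map (fun s => prob_from n rule [v0] s *
                   (if all_covered n (v0 :: s) then 0 else 1))
         (seqs n t)).

(* partial sums sum_{t<T} P(C_E > t); E[C_E] = sup_T of these (tail-sum
   formula for a [0,infinity]-valued random variable). *)
Fixpoint cover_tail_partial (n : nat) (rule : list nat -> nat -> R) (v0 T : nat) : R :=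
  match T with
  | O => 0
  | S T' => cover_tail_partial n rule v0 T' + prob_cover_gt n rule v0 T'
  end.

Definition num_edges (n : nat) : R := INR n * INR (n - 1) / 2.

From Stdlib Require Import Reals List Arith Lia Lra Bool FunctionalExtensionality.
Import ListNotations.
Open Scope R_scope.

(* Call a vertex unsaturated if some incident edge is still untraversed.  With
   U untraversed edges, k unsaturated vertices and current vertex v, the
   potential  U + (n-1) H_k - [v unsaturated] (n-1)/k  drops in expectation by
   at least 1 per step until the edges are covered: a greedy step decreases U
   and does not increase k, while a uniform step from a saturated vertex leaves
   U and k unchanged and reaches an unsaturated vertex with probability
   k/(n-1).  Hence E[C_E] is at most the initial potential
   |E| + (n-1) H_(n-1) <= |E| + (n-1)(1 + ln n). *)

Definition sumR {A} (l : list A) (f : A -> R) : R := fold_right Rplus 0 (map f l).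

Lemma sumR_app {A} (l1 l2 : list A) f : sumR (l1 ++ l2) f = sumR l1 f + sumR l2 f.
Proof. unfold sumR; induction l1; simpl; [lra | rewrite IHl1; lra]. Qed.

Lemma sumR_plus {A} (l : list A) f g :
  sumR l (fun x => f x + g x) = sumR l f + sumR l g.
Proof. unfold sumR; induction l; simpl; [lra | rewrite IHl; lra]. Qed.

Lemma sumR_scal {A} (l : list A) c f : sumR l (fun x => c * f x) = c * sumR l f.
Proof. unfold sumR; induction l; simpl; [lra | rewrite IHl; lra]. Qed.

Lemma sumR_ext {A} (l : list A) f g :
  (forall x, In x l -> f x = g x) -> sumR l f = sumR l g.
Proof.
  unfold sumR; induction l; intros H; simpl; [reflexivity|].
  rewrite H by (simpl; auto). f_equal. apply IHl. intros; apply H; simpl; auto.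
Qed.

Lemma sumR_le {A} (l : list A) f g :
  (forall x, In x l -> f x <= g x) -> sumR l f <= sumR l g.
Proof.
  unfold sumR; induction l; intros H; simpl; [lra|].
  apply Rplus_le_compat; [apply H; simpl; auto | apply IHl; intros; apply H; simpl; auto].
Qed.

Lemma sumR_map {A B} (l : list A) (g : A -> B) f :
  sumR (map g l) f = sumR l (fun x => f (g x)).
Proof. unfold sumR. rewrite map_map. reflexivity. Qed.

Lemma sumR_flat_map {A B} (l : list A) (g : A -> list B) f :
  sumR (flat_map g l) f = sumR l (fun x => sumR (g x) f).
Proof. induction l; simpl; [reflexivity|]. rewrite sumR_app, IHl. reflexivity. Qed.

Definition count_if {A} (p : A -> bool) (l : list A) : nat := length (filter p l).

Lemma INR_count_if {A} (p : A -> bool) l :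
  INR (count_if p l) = sumR l (fun x => if p x then 1 else 0).
Proof.
  unfold count_if, sumR; induction l; simpl; [reflexivity|].
  destruct (p a); simpl length; rewrite ?S_INR, IHl; lra.
Qed.

Lemma count_if_le {A} (p q : A -> bool) l :
  (forall x, In x l -> p x = true -> q x = true) -> (count_if p l <= count_if q l)%nat.
Proof.
  unfold count_if; induction l; simpl; intros H; [lia|].
  specialize (IHl (fun x Hx => H x (or_intror Hx))).
  destruct (p a) eqn:Ep; [rewrite (H a (or_introl eq_refl) Ep); simpl; lia|].
  destruct (q a); simpl; lia.
Qed.

Lemma count_if_lt {A} (p q : A -> bool) l x :
  (forall x, In x l -> p x = true -> q x = true) ->
  In x l -> p x = false -> q x = true -> (count_if p l < count_if q l)%nat.
Proof.
  intros Hpq Hx Hp Hq. unfold count_if in *; induction l; simpl in *; [contradiction|].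
  destruct Hx as [<- | Hx].
  - rewrite Hp, Hq. simpl.
    pose proof (count_if_le p q l (fun y Hy => Hpq y (or_intror Hy))). unfold count_if in *. lia.
  - specialize (IHl (fun y Hy => Hpq y (or_intror Hy)) Hx).
    destruct (p a) eqn:Ep; [rewrite (Hpq a (or_introl eq_refl) Ep); simpl; lia|].
    destruct (q a); simpl; lia.
Qed.

Lemma count_if_pos {A} (p : A -> bool) l x : In x l -> p x = true -> (0 < count_if p l)%nat.
Proof.
  intros Hx Hp. unfold count_if.
  destruct (filter p l) eqn:E; simpl; [|lia].
  assert (In x (filter p l)) by (apply filter_In; auto). rewrite E in H. contradiction.
Qed.

Lemma count_if_seq_eqb v m k :
  count_if (Nat.eqb v) (seq m k) = if (m <=? v) && (v <? m + k) then 1%nat else 0%nat.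
Proof.
  unfold count_if. revert m; induction k; intros m; simpl.
  - destruct (m <=? v) eqn:E1, (v <? m + 0) eqn:E2; simpl; try reflexivity.
    apply Nat.leb_le in E1; apply Nat.ltb_lt in E2; lia.
  - destruct (Nat.eqb_spec v m) as [->|Hne]; simpl; rewrite IHk.
    + replace ((S m <=? m)) with false by (symmetry; apply Nat.leb_gt; lia).
      rewrite Nat.leb_refl. replace (m <? m + S k) with true by (symmetry; apply Nat.ltb_lt; lia).
      reflexivity.
    + destruct (Nat.leb_spec (S m) v), (Nat.leb_spec m v), (Nat.ltb_spec v (S m + k)),
        (Nat.ltb_spec v (m + S k)); simpl; try reflexivity; lia.
Qed.

Lemma count_if_neqb_seq v k : (v < k)%nat -> count_if (fun w => negb (v =? w)) (seq 0 k) = (k - 1)%nat.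
Proof.
  intros Hv. pose proof (filter_length (Nat.eqb v) (seq 0 k)) as E.
  pose proof (count_if_seq_eqb v 0 k) as E1. unfold count_if in *.
  rewrite E1, length_seq in E. replace ((0 <=? v) && (v <? 0 + k)) with true in E
    by (symmetry; apply andb_true_iff; split; [apply Nat.leb_le | apply Nat.ltb_lt]; lia).
  lia.
Qed.

Lemma edge_eqb_sym a b c d : edge_eqb a b c d = edge_eqb a b d c.
Proof. unfold edge_eqb. destruct (a =? c), (b =? d), (a =? d), (b =? c); reflexivity. Qed.

Lemma edge_eqb_refl a b : edge_eqb a b a b = true.
Proof. unfold edge_eqb. rewrite !Nat.eqb_refl. reflexivity. Qed.

Lemma edge_eqbP a b c d : edge_eqb a b c d = true -> (c = a /\ d = b) \/ (c = b /\ d = a).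
Proof.
  unfold edge_eqb. rewrite orb_true_iff, !andb_true_iff, !Nat.eqb_eq. intuition.
Qed.

Lemma traversed_sym h u v : traversed h u v = traversed h v u.
Proof.
  induction h as [|x t IH]; [reflexivity|].
  destruct t as [|y t']; [reflexivity|].
  change (edge_eqb x y u v || traversed (y :: t') u v = edge_eqb x y v u || traversed (y :: t') v u).
  rewrite IH, edge_eqb_sym. reflexivity.
Qed.

Lemma traversed_snoc h w u v : h <> [] ->
  traversed (h ++ [w]) u v = traversed h u v || edge_eqb (last h 0%nat) w u v.
Proof.
  induction h as [|x t IH]; intros Hne; [congruence|].
  destruct t as [|y t'].
  - simpl. rewrite orb_false_r. reflexivity.
  - change (edge_eqb x y u v || traversed ((y :: t') ++ [w]) u v =
            (edge_eqb x y u v || traversed (y :: t') u v) || edge_eqb (last (y :: t') 0%nat) w u v).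
    rewrite IH by discriminate. apply orb_assoc.
Qed.

Fixpoint harmonic (m : nat) : R :=
  match m with O => 0 | S k => harmonic k + / INR (S k) end.

Lemma harmonic_le m m' : (m <= m')%nat -> harmonic m <= harmonic m'.
Proof.
  induction 1; cbn [harmonic]; [lra|].
  pose proof (Rinv_0_lt_compat _ (lt_0_INR (S m0) (Nat.lt_0_succ m0))). lra.
Qed.

Lemma harmonic_ge0 m : 0 <= harmonic m.
Proof. apply (harmonic_le 0). lia. Qed.

Section Potential.

Variable n : nat.
Implicit Types tr : nat -> nat -> bool.

Definition unsaturated tr x : bool :=
  existsb (fun y => negb (x =? y) && negb (tr x y)) (seq 0 n).

Definition num_unsaturated tr : nat := count_if (unsaturated tr) (seq 0 n).

Definition num_untraversed tr : nat :=
  count_if (fun uv => (fst uv <? snd uv) && negb (tr (fst uv) (snd uv)))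
    (list_prod (seq 0 n) (seq 0 n)).

(* When [v] is unsaturated the last term, with [k = num_unsaturated tr > 0],
   replaces [H_k] by [H_(k-1)]. *)
Definition potential tr v : R :=
  INR (num_untraversed tr) + INR (n - 1) * harmonic (num_unsaturated tr)
  - (if unsaturated tr v then INR (n - 1) / INR (num_unsaturated tr) else 0).

Lemma unsaturated_iff tr x :
  unsaturated tr x = true <-> exists y, (y < n)%nat /\ x <> y /\ tr x y = false.
Proof.
  unfold unsaturated. rewrite existsb_exists. split.
  - intros [y [Hy H]]. rewrite andb_true_iff, !negb_true_iff, Nat.eqb_neq in H.
    apply in_seq in Hy. exists y. split; [lia | exact H].
  - intros [y [Hy [Hxy Htr]]]. exists y. rewrite in_seq. split; [lia|].
    apply Nat.eqb_neq in Hxy. rewrite Hxy, Htr. reflexivity.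
Qed.

Lemma unsaturated_anti tr tr' x :
  (forall a b, tr a b = true -> tr' a b = true) ->
  unsaturated tr' x = true -> unsaturated tr x = true.
Proof.
  rewrite !unsaturated_iff. intros Hsub [y [Hy [Hxy Htr]]]. exists y.
  repeat split; auto. destruct (tr x y) eqn:E; [|reflexivity].
  rewrite (Hsub _ _ E) in Htr. discriminate.
Qed.

Lemma saturated_traversed tr x y :
  unsaturated tr x = false -> (y < n)%nat -> x <> y -> tr x y = true.
Proof.
  intros Hx Hy Hxy. destruct (tr x y) eqn:E; [reflexivity|].
  assert (unsaturated tr x = true) by (apply unsaturated_iff; eauto). congruence.
Qed.

Lemma num_unsaturated_anti tr tr' :
  (forall a b, tr a b = true -> tr' a b = true) ->
  (num_unsaturated tr' <= num_unsaturated tr)%nat.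
Proof. intros Hsub. apply count_if_le. intros x _. apply unsaturated_anti; auto. Qed.

Lemma potential_unsaturated tr v : (v < n)%nat -> unsaturated tr v = true ->
  exists k, num_unsaturated tr = S k /\
    potential tr v = INR (num_untraversed tr) + INR (n - 1) * harmonic k.
Proof.
  intros Hv Hu. unfold potential. rewrite Hu.
  assert (Hk : (0 < num_unsaturated tr)%nat) by (apply (count_if_pos _ _ v); auto; apply in_seq; lia).
  destruct (num_unsaturated tr) as [|k]; [lia|]. exists k. split; [reflexivity|].
  cbn [harmonic]. unfold Rdiv. ring.
Qed.

Lemma potential_ge0 tr v : (v < n)%nat -> 0 <= potential tr v.
Proof.
  intros Hv. pose proof (pos_INR (n - 1)). pose proof (pos_INR (num_untraversed tr)).
  destruct (unsaturated tr v) eqn:E.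
  - destruct (potential_unsaturated tr v Hv E) as [k [_ ->]].
    pose proof (Rmult_le_pos _ _ H (harmonic_ge0 k)). lra.
  - unfold potential. rewrite E.
    pose proof (Rmult_le_pos _ _ H (harmonic_ge0 (num_unsaturated tr))). lra.
Qed.

Lemma num_untraversed_lt tr tr' v w :
  (forall a b, tr a b = true -> tr' a b = true) ->
  (forall a b, tr a b = tr b a) -> (forall a b, tr' a b = tr' b a) ->
  (v < n)%nat -> (w < n)%nat -> v <> w -> tr v w = false -> tr' v w = true ->
  (num_untraversed tr' < num_untraversed tr)%nat.
Proof.
  intros Hsub Hsym Hsym' Hv Hw Hvw Ht Ht'.
  assert (Hab : exists a b, (a < b < n)%nat /\ tr a b = false /\ tr' a b = true).
  { destruct (Nat.lt_ge_cases v w).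
    - exists v, w. repeat split; auto; lia.
    - exists w, v. rewrite Hsym, Hsym'. repeat split; auto; lia. }
  destruct Hab as [a [b [Hlt [Hta Hta']]]].
  apply (count_if_lt _ _ _ (a, b)); simpl.
  - intros [x y] _. simpl. rewrite !andb_true_iff, !negb_true_iff. intros [Hxy Hn].
    split; [exact Hxy|]. destruct (tr x y) eqn:E; [|reflexivity].
    rewrite (Hsub _ _ E) in Hn. discriminate.
  - apply in_prod; apply in_seq; lia.
  - rewrite Hta'. apply andb_false_r.
  - rewrite Hta. replace (a <? b) with true by (symmetry; apply Nat.ltb_lt; lia). reflexivity.
Qed.

(* A greedy step across a fresh edge [vw]: [num_untraversed] drops, and
   either [w] stays unsaturated or it leaves the unsaturated set. *)
Lemma potential_greedy_step tr tr' v w :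
  (forall a b, tr a b = true -> tr' a b = true) ->
  (forall a b, tr a b = tr b a) -> (forall a b, tr' a b = tr' b a) ->
  (v < n)%nat -> (w < n)%nat -> v <> w -> tr v w = false -> tr' v w = true ->
  potential tr' w + 1 <= potential tr v.
Proof.
  intros Hsub Hsym Hsym' Hv Hw Hvw Ht Ht'.
  pose proof (num_untraversed_lt tr tr' v w Hsub Hsym Hsym' Hv Hw Hvw Ht Ht') as HU.
  apply le_INR in HU. rewrite S_INR in HU.
  assert (Hv_uns : unsaturated tr v = true) by (apply unsaturated_iff; eauto).
  assert (Hw_uns : unsaturated tr w = true)
    by (apply unsaturated_iff; exists v; rewrite Hsym; auto).
  destruct (potential_unsaturated tr v Hv Hv_uns) as [k [Ek ->]].
  pose proof (pos_INR (n - 1)) as Hc.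
  assert (Hk : (num_unsaturated tr' <= S k)%nat) by (rewrite <- Ek; apply num_unsaturated_anti; auto).
  destruct (unsaturated tr' w) eqn:Ew.
  - destruct (potential_unsaturated tr' w Hw Ew) as [k' [Ek' ->]].
    assert (harmonic k' <= harmonic k) by (apply harmonic_le; lia).
    pose proof (Rmult_le_compat_l _ _ _ Hc H). lra.
  - assert (Hlt : (num_unsaturated tr' < num_unsaturated tr)%nat).
    { apply (count_if_lt _ _ _ w); auto.
      - intros x _. apply unsaturated_anti; auto.
      - apply in_seq; lia. }
    unfold potential. rewrite Ew.
    assert (harmonic (num_unsaturated tr') <= harmonic k) by (apply harmonic_le; lia).
    pose proof (Rmult_le_compat_l _ _ _ Hc H). lra.
Qed.

End Potential.

Lemma sumR_list_prod {A B} (l : list A) (l' : list B) f :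
  sumR (list_prod l l') f = sumR l (fun x => sumR l' (fun y => f (x, y))).
Proof.
  induction l; [reflexivity|]. simpl list_prod. rewrite sumR_app, IHl, sumR_map. reflexivity.
Qed.

Lemma sumR_seq_S k f : sumR (seq 0 (S k)) f = sumR (seq 0 k) f + f k.
Proof. rewrite seq_S, sumR_app. unfold sumR at 2. simpl. lra. Qed.

Lemma sumR_const {A} (l : list A) c : sumR l (fun _ => c) = c * INR (length l).
Proof.
  unfold sumR; induction l; cbn [map fold_right length]; [simpl; lra|].
  rewrite S_INR, IHl. lra.
Qed.

Lemma count_ordered_pairs k :
  INR (count_if (fun uv => fst uv <? snd uv) (list_prod (seq 0 k) (seq 0 k))) = num_edges k.
Proof.
  rewrite INR_count_if, sumR_list_prod. unfold num_edges. simpl fst; simpl snd.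
  induction k as [|k IH]; [unfold sumR; simpl; lra|].
  rewrite sumR_seq_S.
  rewrite (sumR_ext _ _ (fun u => sumR (seq 0 k) (fun v => if u <? v then 1 else 0) + 1))
    by (intros u Hu; apply in_seq in Hu; rewrite sumR_seq_S;
        replace (u <? k) with true by (symmetry; apply Nat.ltb_lt; lia); reflexivity).
  rewrite sumR_seq_S, Nat.ltb_irrefl, sumR_plus, IH.
  rewrite (sumR_ext _ (fun v => if k <? v then 1 else 0) (fun _ => 0 * 1))
    by (intros v Hv; apply in_seq in Hv; replace (k <? v) with false
          by (symmetry; apply Nat.ltb_ge; lia); lra).
  rewrite sumR_scal, sumR_const, length_seq.
  replace (S k - 1)%nat with k by lia. rewrite S_INR.
  destruct k; [simpl; lra|]. replace (S k - 1)%nat with k by lia. rewrite S_INR. lra.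
Qed.

Definition uncovered (n : nat) (h : list nat) : R := if all_covered n h then 0 else 1.

Definition prob_uncovered n rule (h : list nat) (t : nat) : R :=
  sumR (seqs n t) (fun s => prob_from n rule h s * uncovered n (h ++ s)).

Fixpoint tail_sum n rule (h : list nat) (T : nat) : R :=
  match T with
  | O => 0
  | S T' => tail_sum n rule h T' + prob_uncovered n rule h T'
  end.

Lemma cover_tail_partial_tail_sum n rule v0 T :
  cover_tail_partial n rule v0 T = tail_sum n rule [v0] T.
Proof. induction T; simpl; [reflexivity|]. rewrite IHT. reflexivity. Qed.

Lemma prob_uncovered_S n rule h t : prob_uncovered n rule h (S t) =
  sumR (seq 0 n) (fun w => step_prob n rule h w * prob_uncovered n rule (h ++ [w]) t).
Proof.
  unfold prob_uncovered. simpl seqs. rewrite sumR_flat_map. apply sumR_ext. intros w _.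
  rewrite sumR_map, <- sumR_scal. apply sumR_ext. intros s _.
  simpl prob_from. rewrite <- app_assoc. simpl. ring.
Qed.

Lemma tail_sum_S n rule h T : tail_sum n rule h (S T) =
  uncovered n h + sumR (seq 0 n) (fun w => step_prob n rule h w * tail_sum n rule (h ++ [w]) T).
Proof.
  revert h; induction T; intros h.
  - change (0 + prob_uncovered n rule h 0 =
      uncovered n h + sumR (seq 0 n) (fun w => step_prob n rule h w * 0)).
    rewrite (sumR_ext _ _ (fun w => 0 * 0)) by (intros; ring).
    rewrite sumR_scal. unfold prob_uncovered, sumR. simpl. rewrite app_nil_r. ring.
  - change (tail_sum n rule h (S T) + prob_uncovered n rule h (S T) =
      uncovered n h + sumR (seq 0 n) (fun w => step_prob n rule h w *
        (tail_sum n rule (h ++ [w]) T + prob_uncovered n rule (h ++ [w]) T))).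
    rewrite IHT, prob_uncovered_S, Rplus_assoc, <- sumR_plus.
    f_equal. apply sumR_ext. intros w _. ring.
Qed.

Lemma step_prob_ge0 n rule h w : (2 <= n)%nat -> valid_rule n rule -> 0 <= step_prob n rule h w.
Proof.
  intros Hn Hr. unfold step_prob. destruct (has_unused n h) eqn:E.
  - destruct (unused_nbr n h w) eqn:E2; [apply (proj1 (Hr h E)); auto | lra].
  - destruct (_ && _); [|lra]. left. apply Rinv_0_lt_compat, lt_0_INR. lia.
Qed.

Lemma tail_sum_le_drift n rule (Phi : list nat -> R) :
  (2 <= n)%nat -> valid_rule n rule ->
  (forall h, h <> [] -> (last h 0 < n)%nat -> 0 <= Phi h) ->
  (forall h, h <> [] -> (last h 0 < n)%nat ->
     uncovered n h + sumR (seq 0 n) (fun w => step_prob n rule h w * Phi (h ++ [w])) <= Phi h) ->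
  forall T h, h <> [] -> (last h 0 < n)%nat -> tail_sum n rule h T <= Phi h.
Proof.
  intros Hn Hr Hpos Hdrift T. induction T; intros h Hne Hv; [apply Hpos; auto|].
  rewrite tail_sum_S. eapply Rle_trans; [|apply Hdrift; auto].
  apply Rplus_le_compat_l, sumR_le. intros w Hw. apply in_seq in Hw.
  apply Rmult_le_compat_l; [apply step_prob_ge0; auto|].
  apply IHT; [destruct h; discriminate | rewrite last_last; lia].
Qed.

Definition walk_potential (n : nat) (h : list nat) : R :=
  potential n (traversed h) (last h 0%nat).

Lemma unused_nbr_spec n h w : unused_nbr n h w = true ->
  (last h 0 < n)%nat /\ (w < n)%nat /\ last h 0%nat <> w /\
  traversed h (last h 0%nat) w = false.
Proof.
  unfold unused_nbr, last_vertex.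
  rewrite !andb_true_iff, !negb_true_iff, !Nat.ltb_lt, Nat.eqb_neq. tauto.
Qed.

Lemma unsaturated_has_unused n h : (last h 0 < n)%nat ->
  unsaturated n (traversed h) (last h 0%nat) = true -> has_unused n h = true.
Proof.
  intros Hv [w [Hw [Hvw Htr]]]%unsaturated_iff.
  unfold has_unused. apply existsb_exists. exists w. split; [apply in_seq; lia|].
  unfold unused_nbr, last_vertex.
  rewrite Htr, (proj2 (Nat.ltb_lt _ _) Hv), (proj2 (Nat.ltb_lt _ _) Hw),
    (proj2 (Nat.eqb_neq _ _) Hvw). reflexivity.
Qed.

Lemma forallb_false_exists {A} (f : A -> bool) l :
  forallb f l = false -> exists x, In x l /\ f x = false.
Proof.
  induction l; simpl; intros H; [discriminate|].
  destruct (f a) eqn:E; simpl in H; [destruct (IHl H) as [x []] |]; eauto.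
Qed.

Lemma uncovered_num_unsaturated_pos n h :
  all_covered n h = false -> (0 < num_unsaturated n (traversed h))%nat.
Proof.
  intros H. apply forallb_false_exists in H as [u [Hu H]].
  apply forallb_false_exists in H as [v [Hv H]].
  destruct (Nat.ltb_spec u v); simpl in H; [|discriminate].
  apply in_seq in Hv. apply (count_if_pos _ _ u Hu).
  apply unsaturated_iff. exists v. repeat split; auto; lia.
Qed.

Lemma walk_potential_greedy n h w : h <> [] -> unused_nbr n h w = true ->
  walk_potential n (h ++ [w]) + 1 <= walk_potential n h.
Proof.
  intros Hne Hu. destruct (unused_nbr_spec n h w Hu) as [Hv [Hw [Hvw Ht]]].
  unfold walk_potential. rewrite last_last.
  apply (potential_greedy_step n _ _ (last h 0%nat)); auto.
  - intros a b Hab. rewrite traversed_snoc, Hab by auto. reflexivity.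
  - apply traversed_sym.
  - intros a b. rewrite !traversed_snoc, traversed_sym, edge_eqb_sym by auto. reflexivity.
  - rewrite traversed_snoc, edge_eqb_refl by auto. apply orb_true_r.
Qed.

Lemma drift_greedy n rule h : h <> [] -> valid_rule n rule -> has_unused n h = true ->
  sumR (seq 0 n) (fun w => step_prob n rule h w * walk_potential n (h ++ [w]))
  <= walk_potential n h - 1.
Proof.
  intros Hne Hr Hh. destruct (Hr h Hh) as [Hpos Hsum].
  apply Rle_trans with (sumR (seq 0 n)
    (fun w => (walk_potential n h - 1) * (if unused_nbr n h w then rule h w else 0))).
  - apply sumR_le. intros w _. unfold step_prob. rewrite Hh.
    destruct (unused_nbr n h w) eqn:E; [|lra].
    pose proof (walk_potential_greedy n h w Hne E). pose proof (Hpos w E).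
    rewrite (Rmult_comm (_ - 1)). apply Rmult_le_compat_l; lra.
  - rewrite sumR_scal. unfold sumR. rewrite Hsum. lra.
Qed.

Lemma traversed_snoc_saturated n h w : h <> [] ->
  unsaturated n (traversed h) (last h 0%nat) = false -> (w < n)%nat -> last h 0%nat <> w ->
  traversed (h ++ [w]) = traversed h.
Proof.
  intros Hne Hsat Hw Hvw. apply functional_extensionality; intro a.
  apply functional_extensionality; intro b.
  rewrite traversed_snoc by auto.
  destruct (edge_eqb (last h 0%nat) w a b) eqn:E; [|apply orb_false_r].
  rewrite orb_true_r. symmetry.
  apply edge_eqbP in E as [[-> ->] | [-> ->]]; [|rewrite traversed_sym];
    apply (saturated_traversed n); auto.
Qed.

(* A uniform step from a saturated vertex keeps [num_untraversed] and
   [num_unsaturated] = k, and lands on an unsaturated vertex with probability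
   k/(n-1), collecting the reward (n-1)/k. *)
Lemma drift_uniform n rule h : h <> [] -> (2 <= n)%nat -> (last h 0 < n)%nat ->
  has_unused n h = false ->
  uncovered n h + sumR (seq 0 n) (fun w => step_prob n rule h w * walk_potential n (h ++ [w]))
  <= walk_potential n h.
Proof.
  intros Hne Hn Hv Hh.
  set (v := last h 0%nat) in *. set (tr := traversed h).
  assert (Hsat : unsaturated n tr v = false).
  { destruct (unsaturated n tr v) eqn:E; [|reflexivity].
    rewrite (unsaturated_has_unused n h) in Hh; auto. }
  set (c := INR (n - 1)). set (K := num_unsaturated n tr).
  set (A := INR (num_untraversed n tr) + c * harmonic K).
  assert (Hc : 0 < c) by (apply lt_0_INR; lia).
  assert (HA : walk_potential n h = A)
    by (unfold walk_potential, potential; fold v tr; rewrite Hsat; fold c K; unfold A; ring).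
  assert (Hsum : sumR (seq 0 n) (fun w => step_prob n rule h w * walk_potential n (h ++ [w]))
      = / c * A * INR (count_if (fun w => negb (v =? w)) (seq 0 n))
        - / INR K * INR (count_if (unsaturated n tr) (seq 0 n))).
  { rewrite (sumR_ext _ _ (fun w => / c * A * (if negb (v =? w) then 1 else 0)
                          + - / INR K * (if unsaturated n tr w then 1 else 0))).
    { rewrite sumR_plus, !sumR_scal, !INR_count_if. ring. }
    intros w Hw. apply in_seq in Hw.
    unfold step_prob. rewrite Hh. unfold last_vertex. fold v.
    rewrite (proj2 (Nat.ltb_lt w n)) by lia. simpl andb.
    destruct (Nat.eqb_spec v w) as [<- | Hvw]; simpl negb; [rewrite Hsat; ring|].
    unfold walk_potential, potential. rewrite last_last, (traversed_snoc_saturated n h w) by (auto; lia).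
    fold tr K c. destruct (unsaturated n tr w); unfold A, Rdiv; [|ring].
    rewrite Rmult_minus_distr_l, <- Rmult_assoc, Rinv_l by lra. ring. }
  rewrite HA, Hsum, count_if_neqb_seq by auto. fold c K.
  assert (HcA : / c * A * c = A) by (field; lra). rewrite HcA.
  change (count_if (unsaturated n tr) (seq 0 n)) with K.
  unfold uncovered. destruct (all_covered n h) eqn:Ecov.
  - destruct (Nat.eq_dec K 0) as [HK | HK]; [rewrite HK; simpl; lra|].
    rewrite Rinv_l by (apply not_0_INR; auto). lra.
  - pose proof (uncovered_num_unsaturated_pos n h Ecov) as HK.
    change (num_unsaturated n (traversed h)) with K in HK.
    rewrite Rinv_l by (apply not_0_INR; lia). lra.
Qed.

Lemma walk_potential_drift n rule h : h <> [] -> (2 <= n)%nat -> (last h 0 < n)%nat ->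
  valid_rule n rule ->
  uncovered n h + sumR (seq 0 n) (fun w => step_prob n rule h w * walk_potential n (h ++ [w]))
  <= walk_potential n h.
Proof.
  intros Hne Hn Hv Hr. destruct (has_unused n h) eqn:E.
  - pose proof (drift_greedy n rule h Hne Hr E).
    assert (uncovered n h <= 1) by (unfold uncovered; destruct (all_covered n h); lra). lra.
  - apply drift_uniform; auto.
Qed.

Lemma walk_potential_start n v0 : (2 <= n)%nat -> (v0 < n)%nat ->
  walk_potential n [v0] <= num_edges n + INR (n - 1) * harmonic (n - 1).
Proof.
  intros Hn Hv. unfold walk_potential. simpl last.
  change (traversed [v0]) with (fun _ _ : nat => false).
  assert (Hu : unsaturated n (fun _ _ => false) v0 = true).
  { apply unsaturated_iff. exists (if v0 =? 0 then 1 else 0)%nat.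
    destruct (Nat.eqb_spec v0 0); repeat split; lia. }
  destruct (potential_unsaturated n _ _ Hv Hu) as [k [Ek ->]].
  assert (Hk : (S k <= n)%nat)
    by (rewrite <- Ek; pose proof (filter_length_le (unsaturated n (fun _ _ => false)) (seq 0 n));
        rewrite length_seq in *; exact H).
  replace (INR (num_untraversed n (fun _ _ => false))) with (num_edges n).
  2:{ rewrite <- count_ordered_pairs. unfold num_untraversed. do 2 f_equal.
      apply functional_extensionality. intros uv. symmetry. apply andb_true_r. }
  pose proof (Rmult_le_compat_l _ _ _ (pos_INR (n - 1)) (harmonic_le k (n - 1) ltac:(lia))).
  lra.
Qed.

Lemma ln_le_sub1 x : 0 < x -> ln x <= x - 1.
Proof. intros Hx. pose proof (exp_ineq1_le (ln x)). rewrite exp_ln in H by auto. lra. Qed.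

Lemma ln_le x y : 0 < x -> x <= y -> ln x <= ln y.
Proof. intros Hx [Hxy | <-]; [left; apply ln_increasing; auto | lra]. Qed.

(* Each new term satisfies [1/(m+1) <= ln (m+1) - ln m], i.e. [ln (m/(m+1)) <= m/(m+1) - 1]. *)
Lemma harmonic_le_1_ln m : (1 <= m)%nat -> harmonic m <= 1 + ln (INR m).
Proof.
  induction 1 as [|m Hm IH]; [simpl; rewrite ln_1; lra|].
  cbn [harmonic].
  assert (H0 : 0 < INR m) by (apply lt_0_INR; lia).
  assert (HS : 0 < INR (S m)) by (apply lt_0_INR; lia).
  pose proof (ln_le_sub1 (INR m / INR (S m)) (Rdiv_lt_0_compat _ _ H0 HS)) as Hln.
  unfold Rdiv in Hln. rewrite ln_mult, ln_Rinv in Hln by (auto; apply Rinv_0_lt_compat; auto).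
  replace (INR m * / INR (S m) - 1) with (- / INR (S m)) in Hln by (rewrite S_INR in *; field; lra).
  lra.
Qed.

Lemma overhead_le eps n : 0 < eps -> (2 <= n)%nat -> exp (/ eps) <= INR n ->
  INR (n - 1) * harmonic (n - 1) <= (1 + eps) * (INR n * ln (INR n)).
Proof.
  intros Heps Hn Hexp.
  assert (Hn2 : 2 <= INR n) by (apply (le_INR 2); auto).
  assert (Hm : INR (n - 1) = INR n - 1) by (rewrite minus_INR by lia; reflexivity).
  assert (Hinv : / eps <= ln (INR n)) by (rewrite <- (ln_exp (/ eps)); apply ln_le; auto using exp_pos).
  assert (Heln : 1 <= eps * ln (INR n)).
  { replace 1 with (eps * / eps) by (field; lra). apply Rmult_le_compat_l; lra. }
  assert (Hlog : harmonic (n - 1) <= 1 + ln (INR n)).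
  { pose proof (harmonic_le_1_ln (n - 1) ltac:(lia)).
    pose proof (ln_le (INR (n - 1)) (INR n) ltac:(rewrite Hm; lra) ltac:(rewrite Hm; lra)). lra. }
  apply Rle_trans with (INR n * (1 + ln (INR n))).
  { apply Rmult_le_compat; try apply pos_INR; try apply harmonic_ge0; auto. rewrite Hm; lra. }
  nra.
Qed.

Theorem mainTheorem3 :
  forall eps : R, 0 < eps ->
  exists N : nat, forall n : nat, (N <= n)%nat ->
  forall rule : list nat -> nat -> R, valid_rule n rule ->
  forall v0 : nat, (v0 < n)%nat ->
  forall T : nat,
    cover_tail_partial n rule v0 T <= num_edges n + (1 + eps) * (INR n * ln (INR n)).
Proof.
  intros eps Heps.
  destruct (INR_unbounded (exp (/ eps))) as [N0 HN0].
  exists (Nat.max 2 N0). intros n Hn rule Hr v0 Hv T.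
  assert (Hn2 : (2 <= n)%nat) by lia.
  assert (Hexp : exp (/ eps) <= INR n) by (left; eapply Rlt_le_trans; [apply HN0 | apply le_INR; lia]).
  rewrite cover_tail_partial_tail_sum.
  apply Rle_trans with (walk_potential n [v0]).
  - apply (tail_sum_le_drift n rule); try discriminate; auto.
    + intros h _ Hh. apply potential_ge0. exact Hh.
    + intros h Hne Hh. apply walk_potential_drift; auto.
  - eapply Rle_trans; [apply walk_potential_start; auto|].
    apply Rplus_le_compat_l, overhead_le; auto.
Qed.
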